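(* Let $c:[a,b]\times S^1\to\mathbb R^2$ be a smooth horizontal path of immersions ($\langle c_t,c_\theta\rangle\equiv0$), write $c_t=a\,ic_\theta/|c_\theta|$ and $s=|c_\theta|$, and suppose $c$ satisfies the $A=0$ geodesic equation $(|c_\theta|c_t)_t=-\tfrac12\big(|c_t|^2c_\theta/|c_\theta|\big)_\theta$. Then $s(t,\theta)a(t,\theta)^2$ is independent of $t$ for every $\theta$.
   Context: $S^1=\mathbb R/2\pi\mathbb Z$, $\mathbb R^2\cong\mathbb C$. Subscripts denote partial derivatives. *)

From Stdlib Require Import Reals List.
From Coquelicot Require Import Coquelicot.
Open Scope R_scope.

Definition pderiv (d : bool) (f : R -> R -> R) : R -> R -> R :=
  fun t th => if d then Derive (fun u => f u th) t else Derive (fun v => f t v) th.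

Definition d_t (f : R -> R -> R) := pderiv true f.
Definition d_th (f : R -> R -> R) := pderiv false f.

Fixpoint iter_pderiv (ds : list bool) (f : R -> R -> R) : R -> R -> R :=
  match ds with
  | nil => f
  | d :: ds' => pderiv d (iter_pderiv ds' f)
  end.

Definition smooth_on_strip (t0 t1 : R) (f : R -> R -> R) : Prop :=
  forall (ds : list bool) (t th : R), t0 < t < t1 ->
    ex_derive (fun u => iter_pderiv ds f u th) t /\
    ex_derive (fun v => iter_pderiv ds f t v) th /\
    continuous (fun p : R * R => iter_pderiv ds f (fst p) (snd p)) (t, th).

(* 2*pi-periodicity in theta, i.e. a map defined on (t0,t1) x S^1. *)
Definition periodic_th (f : R -> R -> R) : Prop :=
  forall t th, f t (th + 2 * PI) = f t th.

(* Put w := c_theta x c_t = s a (planar cross product). Crossing the geodesic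
   equation with c_theta kills the tangential part of its right-hand side, and
   what remains involves <c_theta_theta, i c_theta>; differentiating the
   horizontality condition <c_t, c_theta> = 0 in theta expresses exactly that
   quantity through s_t. Together they give w_t = a s_t / 2, i.e.
   2 s a_t + a s_t = 0, which is (s a^2)_t = 0. Since a is not assumed
   differentiable, one differentiates s a^2 = w^2 / s, a function of c alone. *)

From Stdlib Require Import Reals List Lra Psatz.
From Coquelicot Require Import Coquelicot.
Open Scope R_scope.

Lemma sum_sq_pos (p q : R) : (p, q) <> (0, 0) -> 0 < p ^ 2 + q ^ 2.
Proof.
  intros Hpq.
  destruct (Req_dec p 0) as [Hp | Hp].
  - assert (Hq : q <> 0) by (intros Hq; apply Hpq; now rewrite Hp, Hq).
    subst p. pose proof (pow2_gt_0 q Hq). lra.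
  - pose proof (pow2_gt_0 p Hp). pose proof (pow2_ge_0 q). lra.
Qed.

Lemma eq_of_is_derive_0 (f : R -> R) (t0 t1 : R) :
  (forall u, t0 < u < t1 -> is_derive f u 0) ->
  forall t t', t0 < t < t1 -> t0 < t' < t1 -> f t = f t'.
Proof.
  intros Hf t t' Ht Ht'.
  destruct (MVT_abs f (fun _ => 0) t' t) as [c [Hc _]].
  { intros c Hc. apply is_derive_Reals, Hf.
    unfold Rmin, Rmax in Hc. destruct (Rle_dec t' t); lra. }
  rewrite Rabs_R0, Rmult_0_l in Hc.
  apply Rabs_eq_0 in Hc. lra.
Qed.

Lemma d_th_d_t (t0 t1 : R) (f : R -> R -> R) (t th : R) :
  smooth_on_strip t0 t1 f -> t0 < t < t1 -> d_th (d_t f) t th = d_t (d_th f) t th.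
Proof.
  intros Hf Ht.
  assert (Hd : 0 < Rmin (t - t0) (t1 - t)) by (apply Rmin_pos; lra).
  symmetry.
  change (Derive (fun z => Derive (fun w => f z w) th) t =
          Derive (fun z => Derive (fun w => f w z) t) th).
  apply Schwarz.
  - exists (mkposreal _ Hd). intros u v Hu _. simpl in Hu.
    assert (Hu' : t0 < u < t1).
    { apply Rabs_def2 in Hu.
      pose proof (Rmin_l (t - t0) (t1 - t)). pose proof (Rmin_r (t - t0) (t1 - t)). lra. }
    repeat split.
    + exact (proj1 (Hf nil u v Hu')).
    + exact (proj1 (proj2 (Hf nil u v Hu'))).
    + exact (proj1 (Hf (false :: nil) u v Hu')).
    + exact (proj1 (proj2 (Hf (true :: nil) u v Hu'))).
  - apply continuity_2d_pt_filterlim.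
    exact (proj2 (proj2 (Hf (true :: false :: nil) t th Ht))).
  - apply continuity_2d_pt_filterlim.
    exact (proj2 (proj2 (Hf (false :: true :: nil) t th Ht))).
Qed.

Lemma d_t_speed_mul (f g h : R -> R -> R) (t th : R) :
  ex_derive (fun u => f u th) t -> ex_derive (fun u => g u th) t ->
  ex_derive (fun u => h u th) t -> 0 < f t th ^ 2 + g t th ^ 2 ->
  d_t (fun u v => sqrt (f u v ^ 2 + g u v ^ 2) * h u v) t th =
  (f t th * d_t f t th + g t th * d_t g t th) / sqrt (f t th ^ 2 + g t th ^ 2) * h t th
  + sqrt (f t th ^ 2 + g t th ^ 2) * d_t h t th.
Proof.
  intros Hf Hg Hh Hpos.
  assert (Hs : 0 < sqrt (f t th ^ 2 + g t th ^ 2)) by now apply sqrt_lt_R0.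
  apply is_derive_unique; auto_derive;
    replace (f t th * (f t th * 1) + g t th * (g t th * 1)) with (f t th ^ 2 + g t th ^ 2) by ring.
  - now repeat split.
  - unfold d_t, pderiv. field. lra.
Qed.

Lemma d_th_energy_div_speed (f g h k r : R -> R -> R) (t th : R) :
  ex_derive (fun v => f t v) th -> ex_derive (fun v => g t v) th ->
  ex_derive (fun v => h t v) th -> ex_derive (fun v => k t v) th ->
  ex_derive (fun v => r t v) th -> 0 < f t th ^ 2 + g t th ^ 2 ->
  d_th (fun u v => (h u v ^ 2 + k u v ^ 2) * r u v / sqrt (f u v ^ 2 + g u v ^ 2)) t th =
  ((2 * h t th * d_th h t th + 2 * k t th * d_th k t th) * r t th
     + (h t th ^ 2 + k t th ^ 2) * d_th r t th) / sqrt (f t th ^ 2 + g t th ^ 2)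
  - (h t th ^ 2 + k t th ^ 2) * r t th
      * ((f t th * d_th f t th + g t th * d_th g t th) / sqrt (f t th ^ 2 + g t th ^ 2))
      / (f t th ^ 2 + g t th ^ 2).
Proof.
  intros Hf Hg Hh Hk Hr Hpos.
  assert (Hs : 0 < sqrt (f t th ^ 2 + g t th ^ 2)) by now apply sqrt_lt_R0.
  apply is_derive_unique; auto_derive;
    replace (f t th * (f t th * 1) + g t th * (g t th * 1)) with (f t th ^ 2 + g t th ^ 2) by ring.
  - repeat split; auto; lra.
  - unfold d_th, pderiv.
    field_simplify_eq; [rewrite pow2_sqrt; lra | lra].
Qed.

Lemma d_t_cross_sq_div_speed (f g h k : R -> R -> R) (t th : R) :
  ex_derive (fun u => f u th) t -> ex_derive (fun u => g u th) t ->
  ex_derive (fun u => h u th) t -> ex_derive (fun u => k u th) t ->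
  0 < f t th ^ 2 + g t th ^ 2 ->
  d_t (fun u v => (f u v * k u v - g u v * h u v) ^ 2 / sqrt (f u v ^ 2 + g u v ^ 2)) t th =
  2 * (f t th * k t th - g t th * h t th)
    * (d_t f t th * k t th + f t th * d_t k t th - d_t g t th * h t th - g t th * d_t h t th)
    / sqrt (f t th ^ 2 + g t th ^ 2)
  - (f t th * k t th - g t th * h t th) ^ 2
      * ((f t th * d_t f t th + g t th * d_t g t th) / sqrt (f t th ^ 2 + g t th ^ 2))
      / (f t th ^ 2 + g t th ^ 2).
Proof.
  intros Hf Hg Hh Hk Hpos.
  assert (Hs : 0 < sqrt (f t th ^ 2 + g t th ^ 2)) by now apply sqrt_lt_R0.
  apply is_derive_unique; auto_derive;
    replace (f t th * (f t th * 1) + g t th * (g t th * 1)) with (f t th ^ 2 + g t th ^ 2) by ring.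
  - repeat split; auto; lra.
  - unfold d_t, pderiv.
    field_simplify_eq; [rewrite pow2_sqrt; lra | lra].
Qed.

Lemma d_th_dot (f g h k : R -> R -> R) (t th : R) :
  ex_derive (fun v => f t v) th -> ex_derive (fun v => g t v) th ->
  ex_derive (fun v => h t v) th -> ex_derive (fun v => k t v) th ->
  d_th (fun u v => h u v * f u v + k u v * g u v) t th =
  d_th h t th * f t th + h t th * d_th f t th + d_th k t th * g t th + k t th * d_th g t th.
Proof.
  intros Hf Hg Hh Hk.
  apply is_derive_unique; auto_derive.
  - now repeat split.
  - unfold d_th, pderiv. ring.
Qed.

Section CrossDensity.

(* Values at one point: (p, q) = c_theta, (pt, qt) = c_theta_t,
   (pth, qth) = c_theta_theta, (Xt, Yt) = c_tt, and (X, Y) = c_t. *)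
Variables p q a s pt qt pth qth Xt Yt : R.
Hypothesis s_pos : 0 < s.
Hypothesis s_sq : s * s = p ^ 2 + q ^ 2.

Let X := a * - q / s.
Let Y := a * p / s.
Let E := X ^ 2 + Y ^ 2.
Let st := (p * pt + q * qt) / s.
Let sth := (p * pth + q * qth) / s.

Lemma energy_eq : E = a ^ 2.
Proof.
  unfold E, X, Y.
  replace ((a * - q / s) ^ 2 + (a * p / s) ^ 2) with (a ^ 2 * (p ^ 2 + q ^ 2) / (s * s))
    by (field; lra).
  rewrite <- s_sq. field. lra.
Qed.

Lemma cross_eq : p * Y - q * X = a * s.
Proof.
  unfold X, Y.
  replace (p * (a * p / s) - q * (a * - q / s)) with (a * (p ^ 2 + q ^ 2) / s) by (field; lra).
  rewrite <- s_sq. field. lra.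
Qed.

Lemma speed_mul_sq_cross : s * a ^ 2 = (p * Y - q * X) ^ 2 / s.
Proof. rewrite cross_eq. field. lra. Qed.

(* theta-derivatives of c_t are written as c_theta_t (symmetry of mixed partials) *)
Hypothesis horizontal : pt * p + X * pth + qt * q + Y * qth = 0.
Hypothesis geodesic_x :
  st * X + s * Xt = - / 2 * (((2 * X * pt + 2 * Y * qt) * p + E * pth) / s
                             - E * p * sth / (p ^ 2 + q ^ 2)).
Hypothesis geodesic_y :
  st * Y + s * Yt = - / 2 * (((2 * X * pt + 2 * Y * qt) * q + E * qth) / s
                             - E * q * sth / (p ^ 2 + q ^ 2)).

Lemma horizontal_speed : s * s * st = - a * (p * qth - q * pth).
Proof.
  unfold st.
  replace (s * s * ((p * pt + q * qt) / s)) with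
    (s * (pt * p + X * pth + qt * q + Y * qth) - a * (p * qth - q * pth)) by (unfold X, Y; field; lra).
  rewrite horizontal. ring.
Qed.

Lemma geodesic_cross : p * Yt - q * Xt = - a * st / 2.
Proof.
  assert (Hcross : st * (p * Y - q * X) + s * (p * Yt - q * Xt)
                   = - / 2 * E * (p * qth - q * pth) / s).
  { replace (st * (p * Y - q * X) + s * (p * Yt - q * Xt))
      with (p * (st * Y + s * Yt) - q * (st * X + s * Xt)) by ring.
    rewrite geodesic_x, geodesic_y. field. split; nra. }
  rewrite cross_eq, energy_eq in Hcross.
  apply Rmult_eq_reg_l with (s * s); [|nra].
  replace (s * s * (p * Yt - q * Xt)) with (s * (st * (a * s) + s * (p * Yt - q * Xt)) - a * (s * s * st))
    by ring.
  rewrite Hcross.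
  replace (s * s * (- a * st / 2)) with (- a / 2 * (s * s * st)) by field.
  rewrite horizontal_speed. field. lra.
Qed.

Lemma cross_density_deriv_eq :
  2 * (p * Y - q * X) * (pt * Y + p * Yt - qt * X - q * Xt) / s
  - (p * Y - q * X) ^ 2 * st / (p ^ 2 + q ^ 2) = 0.
Proof.
  replace (pt * Y + p * Yt - qt * X - q * Xt) with (a * st + (p * Yt - q * Xt))
    by (unfold st, X, Y; field; lra).
  rewrite geodesic_cross, cross_eq, <- s_sq. field. lra.
Qed.

End CrossDensity.

Definition cross_density (x y : R -> R -> R) (th t : R) : R :=
  (d_th x t th * d_t y t th - d_th y t th * d_t x t th) ^ 2
  / sqrt (d_th x t th ^ 2 + d_th y t th ^ 2).

Section Geodesic.

Variables (t0 t1 : R) (x y a : R -> R -> R).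
Hypothesis x_smooth : smooth_on_strip t0 t1 x.
Hypothesis y_smooth : smooth_on_strip t0 t1 y.
Hypothesis immersion : forall t th, t0 < t < t1 -> (d_th x t th, d_th y t th) <> (0, 0).
Hypothesis horizontal : forall t th, t0 < t < t1 ->
  d_t x t th * d_th x t th + d_t y t th * d_th y t th = 0.
Hypothesis a_def : forall t th, t0 < t < t1 ->
  d_t x t th = a t th * (- d_th y t th) / sqrt (d_th x t th ^ 2 + d_th y t th ^ 2) /\
  d_t y t th = a t th * d_th x t th / sqrt (d_th x t th ^ 2 + d_th y t th ^ 2).
Hypothesis geodesic : forall t th, t0 < t < t1 ->
  d_t (fun u v => sqrt (d_th x u v ^ 2 + d_th y u v ^ 2) * d_t x u v) t th =
  - / 2 * d_th (fun u v => (d_t x u v ^ 2 + d_t y u v ^ 2) * d_th x u v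
                           / sqrt (d_th x u v ^ 2 + d_th y u v ^ 2)) t th /\
  d_t (fun u v => sqrt (d_th x u v ^ 2 + d_th y u v ^ 2) * d_t y u v) t th =
  - / 2 * d_th (fun u v => (d_t x u v ^ 2 + d_t y u v ^ 2) * d_th y u v
                           / sqrt (d_th x u v ^ 2 + d_th y u v ^ 2)) t th.

Lemma speed_sq_pos (t th : R) : t0 < t < t1 -> 0 < d_th x t th ^ 2 + d_th y t th ^ 2.
Proof. intros Ht. now apply sum_sq_pos, immersion. Qed.

Lemma speed_mul_a_sq (t th : R) : t0 < t < t1 ->
  sqrt (d_th x t th ^ 2 + d_th y t th ^ 2) * a t th ^ 2 = cross_density x y th t.
Proof.
  intros Ht. unfold cross_density.
  pose proof (speed_sq_pos t th Ht) as Hpos.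
  destruct (a_def t th Ht) as [HX HY]. rewrite HX, HY.
  apply speed_mul_sq_cross.
  - now apply sqrt_lt_R0.
  - now apply sqrt_sqrt, Rlt_le.
Qed.

Lemma cross_density_is_derive_0 (t th : R) : t0 < t < t1 ->
  is_derive (cross_density x y th) t 0.
Proof.
  intros Ht. unfold cross_density.
  pose proof (speed_sq_pos t th Ht) as Hpos.
  destruct (x_smooth (false :: nil) t th Ht) as [pt_ex [pth_ex _]].
  destruct (y_smooth (false :: nil) t th Ht) as [qt_ex [qth_ex _]].
  destruct (x_smooth (true :: nil) t th Ht) as [Xt_ex [Xth_ex _]].
  destruct (y_smooth (true :: nil) t th Ht) as [Yt_ex [Yth_ex _]].
  assert (Hderiv :
    d_t (fun u v => (d_th x u v * d_t y u v - d_th y u v * d_t x u v) ^ 2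
                    / sqrt (d_th x u v ^ 2 + d_th y u v ^ 2)) t th = 0).
  { destruct (geodesic t th Ht) as [geo_x geo_y].
    rewrite (d_t_speed_mul (d_th x) (d_th y) (d_t x)) in geo_x by assumption.
    rewrite (d_t_speed_mul (d_th x) (d_th y) (d_t y)) in geo_y by assumption.
    rewrite (d_th_energy_div_speed (d_th x) (d_th y) (d_t x) (d_t y)) in geo_x, geo_y
      by assumption.
    assert (horiz : d_th (fun u v => d_t x u v * d_th x u v + d_t y u v * d_th y u v) t th = 0).
    { unfold d_th, pderiv. rewrite (Derive_ext _ (fun _ => 0)).
      - apply Derive_const.
      - intros v. now apply horizontal. }
    rewrite (d_th_dot (d_th x) (d_th y) (d_t x) (d_t y)) in horiz by assumption.
    rewrite (d_t_cross_sq_div_speed (d_th x) (d_th y) (d_t x) (d_t y)) by assumption.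
    rewrite !(d_th_d_t t0 t1 x), !(d_th_d_t t0 t1 y) in geo_x, geo_y, horiz by assumption.
    destruct (a_def t th Ht) as [HX HY].
    rewrite HX, HY in geo_x, geo_y, horiz |- *.
    eapply cross_density_deriv_eq; try eassumption.
    - now apply sqrt_lt_R0.
    - now apply sqrt_sqrt, Rlt_le. }
  rewrite <- Hderiv. apply Derive_correct.
  auto_derive. repeat split; auto.
  apply Rgt_not_eq, sqrt_lt_R0. nra.
Qed.

End Geodesic.

Theorem mainTheorem17 (t0 t1 : R) (x y a : R -> R -> R) :
  t0 < t1 ->
  smooth_on_strip t0 t1 x -> smooth_on_strip t0 t1 y ->
  periodic_th x -> periodic_th y ->
  (forall t th, t0 < t < t1 -> (d_th x t th, d_th y t th) <> (0, 0)) ->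
  (forall t th, t0 < t < t1 ->
     d_t x t th * d_th x t th + d_t y t th * d_th y t th = 0) ->
  (forall t th, t0 < t < t1 ->
     d_t x t th = a t th * (- d_th y t th) / sqrt (d_th x t th ^ 2 + d_th y t th ^ 2) /\
     d_t y t th = a t th * d_th x t th / sqrt (d_th x t th ^ 2 + d_th y t th ^ 2)) ->
  (forall t th, t0 < t < t1 ->
     d_t (fun u v => sqrt (d_th x u v ^ 2 + d_th y u v ^ 2) * d_t x u v) t th =
     - / 2 * d_th (fun u v => (d_t x u v ^ 2 + d_t y u v ^ 2) * d_th x u v
                              / sqrt (d_th x u v ^ 2 + d_th y u v ^ 2)) t th /\
     d_t (fun u v => sqrt (d_th x u v ^ 2 + d_th y u v ^ 2) * d_t y u v) t th =
     - / 2 * d_th (fun u v => (d_t x u v ^ 2 + d_t y u v ^ 2) * d_th y u v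
                              / sqrt (d_th x u v ^ 2 + d_th y u v ^ 2)) t th) ->
  forall th t t', t0 < t < t1 -> t0 < t' < t1 ->
    sqrt (d_th x t th ^ 2 + d_th y t th ^ 2) * a t th ^ 2 =
    sqrt (d_th x t' th ^ 2 + d_th y t' th ^ 2) * a t' th ^ 2.
Proof.
  (* The conservation law is local in theta. *)
  intros _ Hx Hy _ _ Himm Hhor Ha Hgeo th t t' Ht Ht'.
  rewrite !(speed_mul_a_sq t0 t1 x y a) by assumption.
  apply (eq_of_is_derive_0 _ t0 t1); try assumption.
  intros u Hu.
  now apply (cross_density_is_derive_0 t0 t1 x y a).
Qed.
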